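(* Let $Y:=\frac12\sum_{i=1}^N\sum_{k=1}^n[X_{(i,k,1)},X_{(i,k,2)}]$, a continuous vector field on $\mathbb{R}^{nN}$. There exist $c,r>0$ such that $(Y\psi)(p)\leq -c\,\|\nabla\psi(p)\|^4$ for every $p\in\mathbb{R}^{nN}$ with $\psi(p)\leq r$.
   Context: $G=(V,E)$ is an undirected graph with $V=\{1,\ldots,N\}$ and nonempty edge set $E$ of two-element subsets (edges $ij$); $d_{ij}\geq0$ for $ij\in E$. For $p=(p_1,\ldots,p_N)\in\mathbb{R}^{nN}$: $\psi_i(p)=\frac14\sum_{j:\,ij\in E}(\|p_j-p_i\|^2-d_{ij}^2)^2$ and $\psi(p)=\frac14\sum_{ij\in E}(\|p_j-p_i\|^2-d_{ij}^2)^2$. For each $i$, $b_{i,1},\ldots,b_{i,n}$ is an orthonormal basis of $\mathbb{R}^n$; $B_{i,k}$ is the constant vector field on $\mathbb{R}^{nN}$ with $i$-th block $b_{i,k}$ and other blocks $0$. $X_{(i,k,\nu)}(p):=h_\nu(\psi_i(p))B_{i,k}(p)$; these vector fields are of class $C^1$, and $[X,Z](p)=\mathrm{D}Z(p)X(p)-\mathrm{D}X(p)Z(p)$ is the Lie bracket; $Y\psi(p)=\mathrm{D}\psi(p)Y(p)$. The functions $h_1,h_2:\mathbb{R}\to\mathbb{R}$ satisfy, for $\nu=1,2$: (i) $h_\nu(y)=0$ for $y\leq 0$; (ii) $h_\nu$ is bounded and of class $C^2$ on $(0,\infty)$; (iii) $h_\nu(y)/y$ remains bounded as $y\downarrow 0$;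 (iv) $h_\nu'(y)$ remains bounded as $y\downarrow0$; (v) $h_\nu''(y)\,y$ remains bounded as $y\downarrow 0$; (vi) there exist $r',c'>0$ with $h_2'(y)h_1(y)-h_1'(y)h_2(y)\leq -c'y$ for all $y\in(0,r']$. *)

From HB Require Import structures.
From mathcomp Require Import all_boot all_order all_algebra.
From mathcomp Require Import all_classical all_reals all_analysis.
Set Implicit Arguments. Unset Strict Implicit. Unset Printing Implicit Defensive.
Import Order.TTheory GRing.Theory Num.Theory.
Import numFieldNormedType.Exports.
Local Open Scope ring_scope.
Local Open Scope classical_set_scope.

(* Configurations p = (p_1,...,p_N) in R^{nN} are N x n matrices: row i is p_i.
   Vertices {1,...,N} are indexed by 'I_N. *)
Section Defs.
Variables (R : realType) (N n : nat).
Notation conf := 'M[R]_(N, n).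

Definition sqdist (p : conf) (i j : 'I_N) : R :=
  \sum_(k < n) (p j k - p i k) ^+ 2.

Variables (E : {set {set 'I_N}}) (d : {set 'I_N} -> R).

Definition edge_term (p : conf) (i j : 'I_N) : R :=
  (sqdist p i j - d [set i; j]%SET ^+ 2) ^+ 2.

Definition psi_i (i : 'I_N) (p : conf) : R :=
  4^-1 * \sum_(j : 'I_N | [set i; j]%SET \in E) edge_term p i j.

(* each edge {i,j} counted once, via i < j *)
Definition psi (p : conf) : R :=
  4^-1 * \sum_(i : 'I_N) \sum_(j : 'I_N | (i < j)%N && ([set i; j]%SET \in E))
     edge_term p i j.

(* orthonormal bases b i k (k < n) of R^n, one per vertex i *)
Variable b : 'I_N -> 'I_n -> 'rV[R]_n.

Definition Bfield (i : 'I_N) (k : 'I_n) : conf :=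
  \matrix_(i', m) (if i' == i then b i k 0 m else 0).

Definition Xfield (h : R -> R) (i : 'I_N) (k : 'I_n) (p : conf) : conf :=
  h (psi_i i p) *: Bfield i k.

Definition lie (X Z : conf -> conf) (p : conf) : conf :=
  'd Z p (X p) - 'd X p (Z p).

Definition Yfield (h1 h2 : R -> R) (p : conf) : conf :=
  2^-1 *: \sum_(i < N) \sum_(k < n) lie (Xfield h1 i k) (Xfield h2 i k) p.

Definition Ypsi (h1 h2 : R -> R) (p : conf) : R := 'd psi p (Yfield h1 h2 p).

Definition grad_sqnorm (p : conf) : R :=
  \sum_(i < N) \sum_(k < n) ('d psi p (delta_mx i k)) ^+ 2.

End Defs.

Definition admissible_h (R : realType) (h : R -> R) : Prop :=
  (forall y, y <= 0 -> h y = 0) /\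
  (exists M : R, forall y, `|h y| <= M) /\
  (forall x : R, 0 < x -> derivable h x 1) /\
  (forall x : R, 0 < x -> derivable (derive1 h) x 1) /\
  (forall x : R, 0 < x -> {for x, continuous (derive1n 2 h)}) /\
  (exists M delta : R, 0 < delta /\ forall y, 0 < y < delta -> `|h y / y| <= M) /\
  (exists M delta : R, 0 < delta /\ forall y, 0 < y < delta -> `|(derive1 h) y| <= M) /\
  (exists M delta : R, 0 < delta /\ forall y, 0 < y < delta -> `|(derive1n 2 h) y * y| <= M).

From HB Require Import structures.
From mathcomp Require Import all_boot all_order all_algebra.
From mathcomp Require Import all_classical all_reals all_analysis.
From mathcomp Require Import ring lra.
Import Order.TTheory GRing.Theory Num.Theory.
Import numFieldNormedType.Exports.
Local Open Scope ring_scope.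

(* Each field X_(i,k,nu) is h_nu(psi_i) times a constant field living in the
   i-th block, and on that block psi_i and psi have the same gradient g_i.
   Hence [X_(i,k,1), X_(i,k,2)] = W(psi_i) <g_i, b_ik> B_ik with the Wronskian
   W = h_2' h_1 - h_1' h_2, and summing over the orthonormal basis b_i gives
   Y psi = 1/2 sum_i W(psi_i) |g_i|^2.  Each g_i is a combination of the edge
   errors, whose squares sum to 4 psi_i, so |g_i|^2 <= K psi_i near the zero
   set of psi, where also W(psi_i) <= -c' psi_i; every term is then at most
   -(c'/K) |g_i|^4, and Cauchy-Schwarz over i bounds sum_i |g_i|^4 below by
   |grad psi|^4 / N. *)

Lemma sum_pairs_lt {V : nmodType} {N} (F : 'I_N -> 'I_N -> V) :
  (forall i, F i i = 0) ->
  \sum_(i < N) \sum_(j < N | (i < j)%N) (F i j + F j i) = \sum_(i < N) \sum_(j < N) F i j.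
Proof.
move=> F0.
have split_row i : \sum_(j < N) F i j =
    \sum_(j < N | (i < j)%N) F i j + \sum_(j < N | (j < i)%N) F i j.
  rewrite (bigID (fun j : 'I_N => (i < j)%N)) /=; congr (_ + _).
  rewrite (bigID (fun j : 'I_N => (j < i)%N)) /= [X in _ + X]big1 ?addr0.
    by apply: eq_bigl => j; case: ltngtP.
  by move=> j /andP[]; case: ltngtP => // /ord_inj -> _ _.
under [RHS]eq_bigr do rewrite split_row.
rewrite big_split /=; under eq_bigr do rewrite big_split /=.
rewrite big_split /=; congr (_ + _).
by rewrite (exchange_big_dep xpredT).
Qed.

Lemma sqr_sum_le {R : realDomainType} {N} (u : 'I_N -> R) :
  (\sum_(i < N) u i) ^+ 2 <= N%:R * \sum_(i < N) u i ^+ 2.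
Proof.
have : 0 <= \sum_(i < N) \sum_(j < N) (u i - u j) ^+ 2.
  by apply: sumr_ge0 => i _; apply: sumr_ge0 => j _; exact: sqr_ge0.
have -> : \sum_(i < N) \sum_(j < N) (u i - u j) ^+ 2 =
    2 * (N%:R * \sum_(i < N) u i ^+ 2 - (\sum_(i < N) u i) ^+ 2).
  under eq_bigr => i _ do rewrite (eq_bigr _ (fun j _ => sqrrB (u i) (u j)))
    big_split /= sumrB sumr_const card_ord.
  under eq_bigr do rewrite sumrMnl -mulr_sumr.
  rewrite big_split sumrB /= sumr_const card_ord !sumrMnl -mulr_suml; ring.
by rewrite pmulr_rge0 // subr_ge0.
Qed.

Lemma sum_sqr_orthonormal {R : comUnitRingType} {n} (B : 'M[R]_n) (u : 'rV[R]_n) :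
  B *m B^T = 1%:M -> \sum_(k < n) (u *m B^T) 0 k ^+ 2 = \sum_(m < n) u 0 m ^+ 2.
Proof.
move=> /mulmx1C BtB.
have : (u *m B^T) *m (u *m B^T)^T = u *m u^T.
  by rewrite trmx_mul trmxK mulmxA -(mulmxA u) BtB mulmx1.
move=> /matrixP /(_ 0 0); rewrite !mxE => uu.
have trE (A : 'rV[R]_n) k : A^T k 0 = A 0 k by rewrite mxE.
transitivity (\sum_(k < n) (u *m B^T) 0 k * (u *m B^T)^T k 0).
  by apply: eq_bigr => k _; rewrite trE expr2.
by rewrite uu; apply: eq_bigr => k _; rewrite trE expr2.
Qed.

Lemma mul_le_neg_sqr {R : realFieldType} (K c y w a : R) :
  0 < K -> 0 <= c -> 0 <= a -> a <= K * y -> (0 < y -> w <= - c * y) ->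
  w * a <= - (c / K) * a ^+ 2.
Proof.
move=> K0 c0 a0 aKy wy; have [y0|y0] := ltP 0 y.
  have cK : c = c / K * K by rewrite divfK ?gt_eqF.
  have q0 : 0 <= c / K by rewrite divr_ge0 // ltW.
  set q := c / K in cK q0 *.
  have wa : w * a <= - c * y * a by rewrite ler_wpM2r ?wy.
  have qa : 0 <= q * a * (K * y - a).
    by apply: mulr_ge0; [exact: mulr_ge0 | rewrite subr_ge0].
  rewrite cK in wa; nra.
have -> : a = 0 by apply/le_anti; rewrite a0 andbT (le_trans aKy) // pmulr_rle0.
by rewrite mulr0 expr0n mulr0.
Qed.

Lemma neg_sum_sqr_le {R : realFieldType} {N} (q : R) (a : 'I_N -> R) : 0 <= q ->
  - q * \sum_(i < N) a i ^+ 2 <= - (q / N.+1%:R) * (\sum_(i < N) a i) ^+ 2.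
Proof.
move=> q0; rewrite !mulNr lerN2 mulrAC ler_pdivrMr ?ltr0n // -!mulrA ler_wpM2l // mulrC.
apply: le_trans (sqr_sum_le a) _; rewrite ler_wpM2r ?ler_nat //.
by apply: sumr_ge0 => i _; exact: sqr_ge0.
Qed.

Section PointwiseDifferentials.
Context {R : realType} {V : normedModType R}.

Lemma is_diff_sumr (W : normedModType R) I (r : seq I) (P : pred I)
    (f df : I -> V -> W) x :
  (forall i, is_diff x (f i) (df i)) ->
  is_diff x (fun y => \sum_(i <- r | P i) f i y) (fun v => \sum_(i <- r | P i) df i v).
Proof.
move=> fdf; rewrite -!fct_sumE; elim/big_ind2: _ => //; first exact: is_diff_cst.
by move=> *; exact: is_diffD.
Qed.

Lemma is_diff_subr (W : normedModType R) (f g df dg : V -> W) x :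
  is_diff x f df -> is_diff x g dg ->
  is_diff x (fun y => f y - g y) (fun v => df v - dg v).
Proof. exact: (@is_diffB _ _ _ f g df dg x). Qed.

Lemma is_diff_sqr (f df : V -> R) x : is_diff x f df ->
  is_diff x (fun y => f y ^+ 2) (fun v => 2 * f x * df v).
Proof.
move=> fdf; apply: is_diff_eq (is_diffX 1 fdf) _.
by apply/funext => v /=; rewrite expr1.
Qed.

End PointwiseDifferentials.

Lemma is_diff_mx_coord {R : realType} {m n} (p : 'M[R]_(m, n)) i j :
  is_diff p (fun q : 'M[R]_(m, n) => q i j) (fun v => v i j).
Proof.
have lin : linear (fun q : 'M[R]_(m, n) => q i j) by move=> a q q'; rewrite !mxE.
pose coord : {linear 'M[R]_(m, n) -> R} :=
  HB.pack (fun q : 'M[R]_(m, n) => q i j) (GRing.isLinear.Build _ _ _ _ _ lin).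
have coordC : continuous coord by exact: coord_continuous.
apply: DiffDef; first exact: linear_differentiable coordC.
by rewrite (diff_lin _ coordC).
Qed.

Definition wronskian {R : realType} (h1 h2 : R -> R) (y : R) :=
  derive1 h2 y * h1 y - derive1 h1 y * h2 y.

Section Potential.
Context {R : realType} {N n : nat}.
Variables (E : {set {set 'I_N}}) (d : {set 'I_N} -> R).
Hypothesis loopless : forall i : 'I_N, [set i; i]%SET \notin E.
Notation conf := 'M[R]_(N, n).
Notation "i ~ j" := ([set i; j]%SET \in E) (at level 70).

Definition edge_err (p : conf) i j := sqdist p i j - d [set i; j]%SET ^+ 2.

Lemma sqdistC (p : conf) i j : sqdist p j i = sqdist p i j.
Proof. by apply: eq_bigr => k _; rewrite -sqrrN opprB. Qed.

Lemma edge_errC (p : conf) i j : edge_err p j i = edge_err p i j.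
Proof. by rewrite /edge_err sqdistC finset.setUC. Qed.

Lemma sum_edge_err_sqr (p : conf) i :
  \sum_(j < N | i ~ j) edge_err p i j ^+ 2 = 4 * psi_i E d i p.
Proof. by rewrite /psi_i mulrA mulfV ?mul1r. Qed.

Lemma psi_i_ge0 (p : conf) i : 0 <= psi_i E d i p.
Proof. by rewrite mulr_ge0 ?invr_ge0 ?sumr_ge0 // => j _; exact: sqr_ge0. Qed.

Lemma edge_err_sqr_le (p : conf) i j : i ~ j -> edge_err p i j ^+ 2 <= 4 * psi_i E d i p.
Proof.
move=> ij; rewrite -sum_edge_err_sqr (bigD1 j) //= lerDl.
by apply: sumr_ge0 => l _; exact: sqr_ge0.
Qed.

Lemma sum_psi_i (p : conf) : \sum_(i < N) psi_i E d i p = 2 * psi E d p.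
Proof.
pose F i j := if i ~ j then 4^-1 * edge_err p i j ^+ 2 else 0.
have -> : \sum_(i < N) psi_i E d i p = \sum_(i < N) \sum_(j < N) F i j.
  by apply: eq_bigr => i _; rewrite /psi_i mulr_sumr big_mkcond.
rewrite -sum_pairs_lt; last by move=> i; rewrite /F (negbTE (loopless i)).
rewrite /psi mulr_sumr mulr_sumr; apply: eq_bigr => i _.
rewrite big_mkcondr /= !mulr_sumr; apply: eq_bigr => j _.
rewrite /F finset.setUC; case: ifP => _; last by rewrite !mulr0 addr0.
by rewrite [edge_err p j i]edge_errC /edge_term -/(edge_err p i j); ring.
Qed.

Lemma psi_i_le (p : conf) i : psi_i E d i p <= 2 * psi E d p.
Proof.
rewrite -sum_psi_i (bigD1 i) //= lerDl.
by apply: sumr_ge0 => j _; exact: psi_i_ge0.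
Qed.

Definition psi_grad (p : conf) i m :=
  \sum_(j < N | i ~ j) edge_err p i j * (p i m - p j m).

Lemma is_diff_sqdist (p : conf) i j : is_diff p (fun q => sqdist q i j)
  (fun v => 2 * \sum_(m < n) (p i m - p j m) * (v i m - v j m)).
Proof.
rewrite /sqdist; apply: is_diff_eq.
  apply: is_diff_sumr => m.
  exact/is_diff_sqr/is_diff_subr/is_diff_mx_coord/is_diff_mx_coord.
by apply/funext => v; rewrite mulr_sumr; apply: eq_bigr => m _; ring.
Qed.

Definition psi_i_diff (p : conf) i (v : conf) :=
  \sum_(j < N | i ~ j) edge_err p i j * \sum_(m < n) (p i m - p j m) * (v i m - v j m).

Lemma is_diff_psi_i (p : conf) i : is_diff p (psi_i E d i) (psi_i_diff p i).
Proof.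
apply: is_diff_eq.
  apply: is_diffZ; apply: is_diff_sumr => j.
  by apply/is_diff_sqr/is_diff_subr; exact: is_diff_sqdist.
apply/funext => v; rewrite scalrfctE /= scaler_sumr; apply: eq_bigr => j _.
by rewrite -[0 v]/0 subr0 -[4^-1 *: _]/(4^-1 * _) -/(edge_err p i j); field.
Qed.

Lemma sum_psi_grad_mul (p : conf) i (w : 'I_n -> R) :
  \sum_(m < n) psi_grad p i m * w m =
  \sum_(j < N | i ~ j) edge_err p i j * \sum_(m < n) (p i m - p j m) * w m.
Proof.
under eq_bigr do rewrite mulr_suml; rewrite exchange_big /=.
by apply: eq_bigr => j _; rewrite mulr_sumr; apply: eq_bigr => m _; rewrite mulrA.
Qed.

Lemma diff_psi_i_row (p v : conf) i : (forall j m, j != i -> v j m = 0) ->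
  'd (psi_i E d i) p v = \sum_(m < n) psi_grad p i m * v i m.
Proof.
move=> v_row; have [_ ->] := is_diff_psi_i p i; rewrite /psi_i_diff sum_psi_grad_mul.
apply: eq_bigr => j _; congr (_ * _); apply: eq_bigr => m _.
by have [->|ji] := eqVneq j i; rewrite ?subrr ?mul0r // (v_row j) // subr0.
Qed.

Lemma psiE : psi E d = 2^-1 *: (fun q : conf => \sum_(i < N) psi_i E d i q).
Proof.
apply/funext => q; rewrite scalrfctE /= sum_psi_i -[_ *: _]/(_ * _).
by rewrite mulrA mulVf ?mul1r.
Qed.

Lemma diff_psi (p v : conf) :
  'd (psi E d) p v = \sum_(i < N) \sum_(m < n) psi_grad p i m * v i m.
Proof.
have [_ ->] : is_diff p (psi E d) (2^-1 *: fun w => \sum_(i < N) psi_i_diff p i w).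
  by rewrite psiE; apply/is_diffZ/is_diff_sumr => i; exact: is_diff_psi_i.
(* Split each edge term between its two endpoints; the [A j i] halves are
   then reindexed by [exchange_big]. *)
pose A i j := if i ~ j then edge_err p i j * \sum_(m < n) (p i m - p j m) * v i m else 0.
have psi_i_diffE i : psi_i_diff p i v = \sum_(j < N) (A i j + A j i).
  rewrite /psi_i_diff big_mkcond; apply: eq_bigr => j _; rewrite /A finset.setUC.
  case: ifP => _; last by rewrite addr0.
  rewrite [edge_err p j i]edge_errC -mulrDr -big_split /=.
  by congr (_ * _); apply: eq_bigr => m _; ring.
rewrite scalrfctE /= (eq_bigr _ (fun i _ => psi_i_diffE i)).
under eq_bigr do rewrite big_split /=.
rewrite big_split /= [X in _ + X]exchange_big /= -mulr2n -[X in 2^-1 *: X]mulr_natl.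
rewrite -[2^-1 *: _]/(2^-1 * _) mulrA mulVf ?mul1r //.
by apply: eq_bigr => i _; rewrite sum_psi_grad_mul [RHS]big_mkcond.
Qed.

Lemma diff_psi_row (p v : conf) i : (forall j m, j != i -> v j m = 0) ->
  'd (psi E d) p v = \sum_(m < n) psi_grad p i m * v i m.
Proof.
move=> v_row; rewrite diff_psi (bigD1 i) //= [X in _ + X]big1 ?addr0 // => j ji.
by apply: big1 => m _; rewrite v_row // mulr0.
Qed.

Lemma grad_sqnormE (p : conf) :
  grad_sqnorm E d p = \sum_(i < N) \sum_(m < n) psi_grad p i m ^+ 2.
Proof.
apply: eq_bigr => i _; apply: eq_bigr => k _.
rewrite (@diff_psi_row _ _ i) => [|j m ji]; last by rewrite mxE (negbTE ji).
rewrite (bigD1 k) //= [X in _ + X]big1 ?addr0 => [|m mk]; last first.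
  by rewrite mxE (negbTE mk) andbF mulr0.
by rewrite mxE !eqxx mulr1.
Qed.

Definition dsqr_sum := \sum_(e in E) d e ^+ 2.

Lemma sqdist_le (p : conf) i j : i ~ j -> psi_i E d i p <= 1 ->
  sqdist p i j <= 2 + dsqr_sum.
Proof.
move=> ij psi1.
have err_le : edge_err p i j ^+ 2 <= 4.
  by have := edge_err_sqr_le p i j ij; lra.
have d_le : d [set i; j]%SET ^+ 2 <= dsqr_sum.
  rewrite /dsqr_sum (bigD1 _ ij) /= lerDl.
  by apply: sumr_ge0 => e _; exact: sqr_ge0.
move: err_le; rewrite /edge_err; nra.
Qed.

Definition grad_const := N%:R * (2 + dsqr_sum) * 4 + 1.

Lemma grad_const_gt0 : 0 < grad_const.
Proof.
have : 0 <= dsqr_sum by apply: sumr_ge0 => e _; exact: sqr_ge0.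
have : 0 <= N%:R :> R by [].
rewrite /grad_const; nra.
Qed.

Lemma sum_psi_grad_sqr_le (p : conf) i : psi_i E d i p <= 1 ->
  \sum_(m < n) psi_grad p i m ^+ 2 <= grad_const * psi_i E d i p.
Proof.
move=> psi1.
pose w j m := if i ~ j then edge_err p i j * (p i m - p j m) else 0.
have G_le m : psi_grad p i m ^+ 2 <= N%:R * \sum_(j < N) w j m ^+ 2.
  by rewrite /psi_grad big_mkcond; exact: sqr_sum_le.
apply: (@le_trans _ _ (\sum_(m < n) N%:R * \sum_(j < N) w j m ^+ 2)).
  by apply: ler_sum => m _; exact: G_le.
apply: (@le_trans _ _ (N%:R * (2 + dsqr_sum) * (4 * psi_i E d i p))); last first.
  by have := psi_i_ge0 p i; rewrite /grad_const; lra.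
rewrite -mulr_sumr exchange_big /= -mulrA ler_wpM2l // -sum_edge_err_sqr.
rewrite mulr_sumr [in X in _ <= X]big_mkcond /=; apply: ler_sum => j _; rewrite /w.
case: ifP => ij; last by rewrite big1 // => m _; rewrite expr0n.
have -> : \sum_(m < n) (edge_err p i j * (p i m - p j m)) ^+ 2 =
    edge_err p i j ^+ 2 * sqdist p i j.
  by rewrite -sqdistC mulr_sumr; apply: eq_bigr => m _; rewrite exprMn.
by rewrite mulrC ler_wpM2r ?sqr_ge0 ?sqdist_le.
Qed.

Lemma mul_sum_psi_grad_sqr_le (w : R -> R) (r c : R) (p : conf) i : 0 <= c ->
  (forall y, 0 < y <= r -> w y <= - c * y) ->
  psi E d p <= 2^-1 -> psi E d p <= r / 2 ->
  w (psi_i E d i p) * \sum_(m < n) psi_grad p i m ^+ 2 <=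
  - (c / grad_const) * (\sum_(m < n) psi_grad p i m ^+ 2) ^+ 2.
Proof.
move=> c0 w_le psi_half psi_r.
have psi_i_small := psi_i_le p i; have psi_i0 := psi_i_ge0 p i.
apply: (@mul_le_neg_sqr _ _ _ (psi_i E d i p)) => //.
- exact: grad_const_gt0.
- by apply: sumr_ge0 => m _; exact: sqr_ge0.
- by apply: sum_psi_grad_sqr_le; lra.
- by move=> psi_i_pos; apply: w_le; rewrite psi_i_pos /=; lra.
Qed.

Section VectorFields.
Variable b : 'I_N -> 'I_n -> 'rV[R]_n.
Hypothesis b_orthonormal : forall i k l,
  \sum_(m < n) b i k 0 m * b i l 0 m = (k == l)%:R.

Definition grad_coord (p : conf) i k := \sum_(m < n) psi_grad p i m * b i k 0 m.

Lemma sum_grad_coord_sqr (p : conf) i :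
  \sum_(k < n) grad_coord p i k ^+ 2 = \sum_(m < n) psi_grad p i m ^+ 2.
Proof.
pose B : 'M[R]_n := \matrix_(k, m) b i k 0 m.
have BBt : B *m B^T = 1%:M.
  apply/matrixP => k l; rewrite !mxE -(b_orthonormal i).
  by apply: eq_bigr => m _; rewrite !mxE.
transitivity (\sum_(k < n) ((\row_m psi_grad p i m) *m B^T) 0 k ^+ 2).
  by apply: eq_bigr => k _; rewrite !mxE; congr (_ ^+ 2); apply: eq_bigr => m _; rewrite !mxE.
by rewrite sum_sqr_orthonormal //; apply: eq_bigr => m _; rewrite mxE.
Qed.

Lemma Bfield_row i k j m : j != i -> Bfield b i k j m = 0.
Proof. by move=> ji; rewrite mxE (negbTE ji). Qed.

Lemma diff_psi_Bfield (p : conf) i k : 'd (psi E d) p (Bfield b i k) = grad_coord p i k.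
Proof.
rewrite (@diff_psi_row _ _ i) => [|j m]; last exact: Bfield_row.
by apply: eq_bigr => m _; rewrite mxE eqxx.
Qed.

Lemma diff_psi_i_Bfield (p : conf) i k :
  'd (psi_i E d i) p (Bfield b i k) = grad_coord p i k.
Proof.
rewrite diff_psi_i_row => [|j m]; last exact: Bfield_row.
by apply: eq_bigr => m _; rewrite mxE eqxx.
Qed.

Lemma diff_Xfield (h : R -> R) i k (p v : conf) : derivable h (psi_i E d i p) 1 ->
  'd (Xfield E d b h i k) p v =
  (derive1 h (psi_i E d i p) * 'd (psi_i E d i) p v) *: Bfield b i k.
Proof.
move=> /derivable1_diffP dh; have [dpsi_i _] := is_diff_psi_i p i.
have dhpsi_i : differentiable (h \o psi_i E d i) p by exact: differentiable_comp.
rewrite /Xfield -[fun q => _]/(fun q => (h \o psi_i E d i) q *: Bfield b i k).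
rewrite diffZl // diff_comp //= deriv1E; last exact/derivable1_diffP.
by congr (_ *: _); exact: mulrC.
Qed.

Lemma lie_Xfield (h1 h2 : R -> R) i k (p : conf) :
  (forall y, y <= 0 -> h1 y = 0) -> (forall y, y <= 0 -> h2 y = 0) ->
  (forall y, 0 < y -> derivable h1 y 1) -> (forall y, 0 < y -> derivable h2 y 1) ->
  lie (Xfield E d b h1 i k) (Xfield E d b h2 i k) p =
  (wronskian h1 h2 (psi_i E d i p) * grad_coord p i k) *: Bfield b i k.
Proof.
move=> h1_0 h2_0 dh1 dh2; rewrite /lie.
have [psi_pos|psi_le0] := ltP 0 (psi_i E d i p).
  have dX2 := diff_Xfield h2 i k p (Xfield E d b h1 i k p) (dh2 _ psi_pos).
  have dX1 := diff_Xfield h1 i k p (Xfield E d b h2 i k p) (dh1 _ psi_pos).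
  rewrite [X in X - _ = _]dX2 [X in _ - X = _]dX1 /Xfield !linearZ /=.
  rewrite diff_psi_i_Bfield scalerN -scalerBl /wronskian.
  by congr (_ *: _); rewrite -![_ *: grad_coord p i k]/(_ * grad_coord p i k); ring.
(* Both fields vanish at p, and so does the Wronskian since h1, h2 vanish on (-oo, 0]. *)
have X0 h : (forall y, y <= 0 -> h y = 0) -> Xfield E d b h i k p = 0.
  by move=> h0; rewrite /Xfield h0 // scale0r.
have d0 (f : conf -> conf) : 'd f p 0 = 0 by exact: linear0.
rewrite [Xfield E d b h1 i k p]X0 // [Xfield E d b h2 i k p]X0 //.
rewrite [X in X - _ = _]d0 [X in _ - X = _]d0 subr0.
by rewrite /wronskian h1_0 // h2_0 // !mulr0 subr0 mul0r scale0r.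
Qed.

Lemma YpsiE (h1 h2 : R -> R) (p : conf) :
  (forall y, y <= 0 -> h1 y = 0) -> (forall y, y <= 0 -> h2 y = 0) ->
  (forall y, 0 < y -> derivable h1 y 1) -> (forall y, 0 < y -> derivable h2 y 1) ->
  Ypsi E d b h1 h2 p = 2^-1 * \sum_(i < N)
    wronskian h1 h2 (psi_i E d i p) * \sum_(m < n) psi_grad p i m ^+ 2.
Proof.
move=> h1_0 h2_0 dh1 dh2; rewrite /Ypsi /Yfield linearZ /= linear_sum /=.
congr (_ * _); apply: eq_bigr => i _.
rewrite linear_sum /= -sum_grad_coord_sqr mulr_sumr; apply: eq_bigr => k _.
by rewrite lie_Xfield // linearZ /= diff_psi_Bfield expr2 mulrA.
Qed.

End VectorFields.

End Potential.

Theorem lemma5p3 (R : realType) (N n : nat)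
  (E : {set {set 'I_N}}) (d : {set 'I_N} -> R)
  (b : 'I_N -> 'I_n -> 'rV[R]_n) (h1 h2 : R -> R) :
  E != finset.set0 ->
  (forall e, e \in E -> #|e| = 2%N) ->
  (forall e, e \in E -> 0 <= d e) ->
  (forall (i : 'I_N) (k l : 'I_n),
      \sum_(m < n) b i k 0 m * b i l 0 m = (k == l)%:R) ->
  admissible_h h1 -> admissible_h h2 ->
  (exists r' c' : R, 0 < r' /\ 0 < c' /\
     forall y, 0 < y <= r' ->
       derive1 h2 y * h1 y - derive1 h1 y * h2 y <= - c' * y) ->
  exists c r : R, 0 < c /\ 0 < r /\
    forall p : 'M[R]_(N, n), psi E d p <= r ->
      Ypsi E d b h1 h2 p <= - c * (grad_sqnorm E d p) ^+ 2.
Proof.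
move=> _ card2 _ b_orth [h1_0 [_ [dh1 _]]] [h2_0 [_ [dh2 _]]] [r' [c' [r'0 [c'0 W_le]]]].
have loopless (i : 'I_N) : [set i; i]%SET \notin E.
  by apply/negP => /card2; rewrite finset.setUid cards1.
have K0 := grad_const_gt0 E d.
exists (2^-1 * (c' / grad_const E d / N.+1%:R)), (Num.min (2^-1) (r' / 2)).
split; first by rewrite !mulr_gt0 ?invr_gt0 ?ltr0n.
split; first by rewrite lt_min; apply/andP; split; lra.
move=> p; rewrite le_min => /andP[psi_half psi_r].
rewrite (YpsiE E d loopless b b_orth) // (grad_sqnormE E d loopless).
apply: (@le_trans _ _ (2^-1 * (- (c' / grad_const E d) *
    \sum_(i < N) (\sum_(m < n) psi_grad E d p i m ^+ 2) ^+ 2))).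
  rewrite ler_pM2l ?invr_gt0 // mulr_sumr; apply: ler_sum => i _.
  by apply: (mul_sum_psi_grad_sqr_le E d loopless _ r') => //; exact: ltW.
rewrite -[in X in _ <= X]mulrN -(mulrA 2^-1) ler_pM2l ?invr_gt0 //.
by apply: neg_sum_sqr_le; rewrite divr_ge0 // ltW.
Qed.
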